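(* For integers $0\le r\le m$ with $m\ge1$ and $k\ge1$, the rates of $\mathrm{RM}(r,m)$ and $\mathrm{RM}(r,m+k)$ satisfy $$R(r,m)-R(r,m+k)\le\frac{3k+4}{5\sqrt m}.$$
   Context: The rate of the Reed--Muller code $\mathrm{RM}(r,m)$ is $R(r,m)=2^{-m}\sum_{i=0}^{r}\binom{m}{i}$. *)

From Stdlib Require Import Reals Lra Lia.
Open Scope R_scope.

Definition rm_rate (r m : nat) : R :=
  sum_f_R0 (fun i => Binomial.C m i) r / 2 ^ m.

(* Going from length n to n + 1 lowers the rate of RM(r, -) by exactly
   C(n,r) / 2^(n+1), by Pascal's rule.  Every binomial coefficient satisfies
   C(n,i)^2 n <= 4^n (the classical bound C(2p,p)^2 (2p+1) <= 16^p on the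
   central coefficient, which dominates the others), so each step costs at
   most 1 / (2 sqrt n) <= 1 / (2 sqrt m).  Summing k steps gives
   k / (2 sqrt m) <= (3k + 4) / (5 sqrt m). *)

From Stdlib Require Import Reals Lra Lia.
Open Scope R_scope.

Lemma sqrt_INR_pos n : (1 <= n)%nat -> 0 < sqrt (INR n).
Proof. intros hn. apply sqrt_lt_R0, lt_0_INR. lia. Qed.

Lemma C_nonneg n i : 0 <= C n i.
Proof.
  unfold C. apply Rle_mult_inv_pos; [apply pos_INR|].
  apply Rmult_lt_0_compat; apply INR_fact_lt_0.
Qed.

Lemma C_n_0 n : C n 0 = 1.
Proof. unfold C. rewrite Nat.sub_0_r. simpl. field. apply INR_fact_neq_0. Qed.

Lemma C_n_n n : C n n = 1.
Proof. unfold C. rewrite Nat.sub_diag. simpl. field. apply INR_fact_neq_0. Qed.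

Lemma sum_C_succ n r : (r <= n)%nat ->
  sum_f_R0 (fun i => C (S n) i) r = 2 * sum_f_R0 (fun i => C n i) r - C n r.
Proof.
  induction r as [|r IH]; intros hr; simpl.
  - rewrite !C_n_0. lra.
  - rewrite IH, <- pascal by lia. lra.
Qed.

Lemma rm_rate_succ r n : (r <= n)%nat ->
  rm_rate r n - rm_rate r (S n) = C n r / 2 ^ S n.
Proof.
  intros hr. unfold rm_rate. rewrite sum_C_succ by exact hr. simpl pow.
  field. apply pow_nonzero. lra.
Qed.

Lemma C_central_succ p :
  C (2 * S p) (S p) = 2 * (2 * INR p + 1) / (INR p + 1) * C (2 * p) p.
Proof.
  unfold C.
  replace (2 * S p - S p)%nat with (S p) by lia.
  replace (2 * p - p)%nat with p by lia.
  replace (2 * S p)%nat with (S (S (2 * p))) by lia.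
  rewrite !fact_simpl, !mult_INR, !S_INR, mult_INR. simpl (INR 2).
  field. split; [apply INR_fact_neq_0|]. pose proof (pos_INR p). lra.
Qed.

Lemma C_central_sq_le p : C (2 * p) p ^ 2 * (2 * INR p + 1) <= 16 ^ p.
Proof.
  induction p as [|p IH].
  - simpl. rewrite C_n_0. lra.
  - rewrite C_central_succ, S_INR. simpl (16 ^ S p).
    pose proof (pos_INR p) as hp.
    set (c := C (2 * p) p) in *.
    replace ((2 * (2 * INR p + 1) / (INR p + 1) * c) ^ 2 * (2 * (INR p + 1) + 1))
      with (4 * (2 * INR p + 1) * (2 * INR p + 3) / (INR p + 1) ^ 2
            * (c ^ 2 * (2 * INR p + 1)))
      by (field; lra).
    assert (hratio : 4 * (2 * INR p + 1) * (2 * INR p + 3) / (INR p + 1) ^ 2 <= 16).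
    { apply Rmult_le_reg_r with ((INR p + 1) ^ 2); [nra|].
      field_simplify; nra. }
    assert (0 <= c ^ 2 * (2 * INR p + 1))
      by (apply Rmult_le_pos; [apply pow2_ge_0 | lra]).
    apply Rmult_le_compat; [| assumption | exact hratio | exact IH].
    apply Rmult_le_pos; [nra | apply Rlt_le, Rinv_0_lt_compat; nra].
Qed.

Lemma C_central_ge_1 p : 1 <= C (2 * p) p.
Proof. rewrite <- (C_n_0 (2 * p)). apply C_maj. lia. Qed.

Lemma C_odd_le p i : (i <= 2 * p + 1)%nat -> C (2 * p + 1) i <= 2 * C (2 * p) p.
Proof.
  intros hi. pose proof (C_central_ge_1 p).
  destruct i as [|j].
  - rewrite C_n_0. lra.
  - destruct (Nat.eq_dec j (2 * p)) as [-> | hj].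
    + rewrite Nat.add_1_r, C_n_n. lra.
    + rewrite Nat.add_1_r, <- pascal by lia.
      pose proof (C_maj p j ltac:(lia)). pose proof (C_maj p (S j) ltac:(lia)). lra.
Qed.

Lemma pow4_double p : 4 ^ (2 * p) = 16 ^ p.
Proof. rewrite pow_mult. f_equal. lra. Qed.

Lemma C_sq_le n i : (i <= n)%nat -> C n i ^ 2 * INR n <= 4 ^ n.
Proof.
  intros hi. destruct (Nat.Even_or_Odd n) as [[p ->] | [p ->]];
    pose proof (C_central_sq_le p) as hc; pose proof (pos_INR p) as hp;
    rewrite ?plus_INR, mult_INR in *; simpl (INR 2) in *; simpl (INR 1).
  - assert (C (2 * p) i ^ 2 <= C (2 * p) p ^ 2)
      by (apply pow_incr; split; [apply C_nonneg | apply C_maj; lia]).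
    rewrite pow4_double. nra.
  - assert (C (2 * p + 1) i ^ 2 <= (2 * C (2 * p) p) ^ 2)
      by (apply pow_incr; split; [apply C_nonneg | apply C_odd_le; lia]).
    rewrite pow_add, pow4_double. nra.
Qed.

Lemma C_le_pow2_div_sqrt n i : (1 <= n)%nat -> (i <= n)%nat ->
  C n i <= 2 ^ n / sqrt (INR n).
Proof.
  intros hn hi. pose proof (sqrt_INR_pos n hn) as hsqrt.
  apply Rmult_le_reg_r with (sqrt (INR n)); [exact hsqrt|].
  unfold Rdiv. rewrite Rmult_assoc, Rinv_l, Rmult_1_r by lra.
  assert (0 <= C n i * sqrt (INR n))
    by (apply Rmult_le_pos; [apply C_nonneg | apply sqrt_pos]).
  assert (0 <= 2 ^ n) by (apply pow_le; lra).
  rewrite <- (sqrt_pow2 (C n i * sqrt (INR n))), <- (sqrt_pow2 (2 ^ n)) by assumption.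
  apply sqrt_le_1_alt. rewrite Rpow_mult_distr, pow2_sqrt by apply pos_INR.
  rewrite <- pow_mult, Nat.mul_comm, pow_mult. replace (2 ^ 2) with 4 by lra.
  apply C_sq_le, hi.
Qed.

Lemma rm_rate_succ_le r n : (r <= n)%nat -> (1 <= n)%nat ->
  rm_rate r n - rm_rate r (S n) <= / (2 * sqrt (INR n)).
Proof.
  intros hr hn. rewrite rm_rate_succ by exact hr.
  pose proof (C_le_pow2_div_sqrt n r hn hr).
  pose proof (sqrt_INR_pos n hn).
  assert (0 < 2 ^ n) by (apply pow_lt; lra).
  simpl pow. apply Rmult_le_reg_r with (2 * 2 ^ n); [lra|].
  replace (C n r / (2 * 2 ^ n) * (2 * 2 ^ n)) with (C n r) by (field; lra).
  replace (/ (2 * sqrt (INR n)) * (2 * 2 ^ n)) with (2 ^ n / sqrt (INR n))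
    by (field; lra).
  assumption.
Qed.

Lemma rm_rate_drop_le r m k : (r <= m)%nat -> (1 <= m)%nat ->
  rm_rate r m - rm_rate r (m + k) <= INR k / (2 * sqrt (INR m)).
Proof.
  intros hr hm. pose proof (sqrt_INR_pos m hm) as hsqrt.
  induction k as [|k IH].
  - rewrite Nat.add_0_r. simpl. lra.
  - pose proof (rm_rate_succ_le r (m + k) ltac:(lia) ltac:(lia)) as hstep.
    assert (hmono : / (2 * sqrt (INR (m + k))) <= / (2 * sqrt (INR m))).
    { apply Rinv_le_contravar; [lra|].
      apply Rmult_le_compat_l; [lra|]. apply sqrt_le_1_alt, le_INR. lia. }
    rewrite Nat.add_succ_r, S_INR.
    replace ((INR k + 1) / (2 * sqrt (INR m)))
      with (INR k / (2 * sqrt (INR m)) + / (2 * sqrt (INR m))) by (field; lra).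
    lra.
Qed.

Theorem lemma8 (r m k : nat) :
  (r <= m)%nat -> (1 <= m)%nat -> (1 <= k)%nat ->
  rm_rate r m - rm_rate r (m + k) <= (3 * INR k + 4) / (5 * sqrt (INR m)).
Proof.
  (* k / 2 <= (3k + 4) / 5 for every k. *)
  intros hr hm _.
  eapply Rle_trans; [exact (rm_rate_drop_le r m k hr hm)|].
  pose proof (sqrt_INR_pos m hm). pose proof (pos_INR k).
  replace (INR k / (2 * sqrt (INR m))) with (INR k / 2 * / sqrt (INR m)) by (field; lra).
  replace ((3 * INR k + 4) / (5 * sqrt (INR m)))
    with ((3 * INR k + 4) / 5 * / sqrt (INR m)) by (field; lra).
  apply Rmult_le_compat_r; [apply Rlt_le, Rinv_0_lt_compat; lra | lra].
Qed.
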